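(* There is an absolute constant $C$ such that the following holds. In the negative-fill variable-processor cup game on $n$ cups against a greedy emptier, let $k,m$ be positive integers with $4k\mid m$ and $m\le n$, and suppose that currently at least $m$ cups have fill exactly $0$. Then the filler can ensure that after at most $Ck^3$ rounds at least $m/4$ cups have fill exactly $k/2$.
   Context: Negative-fill variable-processor cup game: real fills; each round the filler chooses an integer $1\le p\le n$ and reals $a_i\in[0,1]$ with $\sum a_i=p$ and adds $a_i$ to cup $i$; then the emptier chooses $p$ distinct cups and subtracts exactly $1$ from each (fills may become negative). The greedy emptier subtracts from the $p$ fullest cups after the filler's move. *)

From HB Require Import structures.
From mathcomp Require Import all_boot all_order all_algebra.
From mathcomp Require Import reals.
Set Implicit Arguments. Unset Strict Implicit. Unset Printing Implicit Defensive.
Import Order.TTheory GRing.Theory Num.Theory.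
Local Open Scope ring_scope.

Section CupGame.
Variables (R : realType) (n : nat).

Definition filler_move (p : nat) (a : 'I_n -> R) : Prop :=
  [/\ (0 < p)%N, (p <= n)%N, (forall i, 0 <= a i <= 1) & \sum_(i < n) a i = p%:R].

Definition greedy_choice (g : 'I_n -> R) (p : nat) (S : {set 'I_n}) : Prop :=
  #|S| = p /\ (forall i j, i \in S -> j \notin S -> g j <= g i).

(* Fills may become negative. *)
Fixpoint can_ensure (goal : ('I_n -> R) -> Prop) (t : nat) (f : 'I_n -> R)
    : Prop :=
  match t with
  | 0 => goal f
  | t'.+1 => goal f \/
      exists p (a : 'I_n -> R), filler_move p a /\
        forall S, greedy_choice (fun i => f i + a i) p S ->
          can_ensure goal t' (fun i => f i + a i - (i \in S)%:R)
  end.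

Definition count_fill (f : 'I_n -> R) (x : R) : nat := #|[set i | f i == x]|.

End CupGame.

From HB Require Import structures.
From mathcomp Require Import all_boot all_order all_algebra.
From mathcomp Require Import reals.
From mathcomp Require Import zify lra.
Set Implicit Arguments.
Unset Strict Implicit.
Unset Printing Implicit Defensive.
Import Order.TTheory GRing.Theory Num.Theory.

(* Split the m cups of fill 0 into 4k chips of s = m/(4k) cups and put them on
   the ladder of fills (i - 2k)/2, 0 <= i <= 3k, all at site i = 2k.  In one
   round the filler can split 2s cups of a common fill x into s cups of fill
   x - 1/2 and s of fill x + 1/2: it adds 1 to every cup fuller than x and 1/2
   to the 2s cups, so the greedy emptier must empty exactly the fuller cups and
   s of the 2s.  This fires a chip-firing site i (two chips leave i, one goes
   to each neighbour), which keeps the number of chips and their first moment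
   8k^2 and raises the energy sum i^2 c_i by 2.  The energy starts at 16k^3
   and never exceeds 36k^3, so after at most 10k^3 rounds no interior site
   holds two chips; the first moment then forces at least k chips, i.e. m/4
   cups, onto the top site, whose fill is k/2. *)

Definition fire (c : nat -> nat) (i : nat) : nat -> nat :=
  fun j => if j == i then c i - 2
           else if (j == i.-1) || (j == i.+1) then c j + 1 else c j.

Definition mass N (c : nat -> nat) := \sum_(0 <= i < N) c i.
Definition moment N (c : nat -> nat) := \sum_(0 <= i < N) i * c i.
Definition energy N (c : nat -> nat) := \sum_(0 <= i < N) i * i * c i.

Lemma sum_nat_mul_eq (G : nat -> nat) a N :
  a < N -> \sum_(0 <= j < N) G j * (j == a) = G a.
Proof.
move=> a_lt; transitivity (\sum_(0 <= j < N | j == a) G j).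
  by rewrite [RHS]big_mkcond; apply: eq_bigr => j _; case: eqP; rewrite ?muln1 ?muln0.
by rewrite big_nat1_eq a_lt.
Qed.

Section ChipFiring.
Variables (N i : nat) (c : nat -> nat).
Hypotheses (i_gt0 : 0 < i) (i_lt : i.+1 < N) (ci_gt1 : 1 < c i).

Lemma sum_fire_weighted (F : nat -> nat) :
  \sum_(0 <= j < N) F j * fire c i j + 2 * F i =
  \sum_(0 <= j < N) F j * c j + F i.-1 + F i.+1.
Proof.
have pointwise j : F j * fire c i j + 2 * F j * (j == i) =
    F j * c j + F j * (j == i.-1) + F j * (j == i.+1).
  rewrite /fire; case: (eqVneq j i) => [->|_].
    have -> : (i == i.-1) = false by lia.
    have -> : (i == i.+1) = false by lia.
    by rewrite !muln0 !addn0 muln1 mulnBr [2 * _]mulnC subnK // leq_mul2l ci_gt1 orbT.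
  rewrite muln0 addn0; case: (eqVneq j i.-1) => [->|_] /=.
    have -> : (i.-1 == i.+1) = false by lia.
    by rewrite muln0 addn0 muln1 mulnDr muln1.
  by case: (eqVneq j i.+1) => [->|_] /=; rewrite ?muln0 ?addn0 ?muln1 ?mulnDr ?muln1.
have : \sum_(0 <= j < N) (F j * fire c i j + 2 * F j * (j == i)) =
    \sum_(0 <= j < N) (F j * c j + F j * (j == i.-1) + F j * (j == i.+1)).
  by apply: eq_bigr => j _; exact: pointwise.
by rewrite !big_split /= !(sum_nat_mul_eq (fun j => 2 * F j)) ?sum_nat_mul_eq //; lia.
Qed.

Lemma mass_fire : mass N (fire c i) = mass N c.
Proof.
have := sum_fire_weighted (fun=> 1); rewrite /mass.
under eq_bigr do rewrite mul1n; under [in RHS]eq_bigr do rewrite mul1n; lia.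
Qed.

Lemma moment_fire : moment N (fire c i) = moment N c.
Proof. have := sum_fire_weighted id; rewrite /moment /=; lia. Qed.

Lemma energy_fire : energy N (fire c i) = energy N c + 2.
Proof.
have squares : i.-1 * i.-1 + i.+1 * i.+1 = 2 * (i * i) + 2 by nia.
by have := sum_fire_weighted (fun j => j * j); rewrite /energy /= -addnA squares; lia.
Qed.

End ChipFiring.

Lemma energy_le N c : energy N.+1 c <= N * N * mass N.+1 c.
Proof.
rewrite /energy /mass big_distrr /= big_nat_cond [X in _ <= X]big_nat_cond.
by apply: leq_sum => i /andP [/andP [_ i_le] _]; rewrite leq_mul2r leq_mul ?orbT.
Qed.

Lemma unstable_interior_site k c : 0 < k ->
  moment (3 * k).+1 c = 8 * k * k -> c (3 * k) < k ->
  exists2 i, 0 < i < 3 * k & 1 < c i.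
Proof.
move=> k_gt0 mom top_lt.
case: (boolP [exists i : 'I_(3 * k), (0 < i) && (1 < c i)]).
  by case/existsP => i /andP [i_gt0 ci]; exists i; rewrite ?i_gt0 ?ltn_ord.
move/existsPn => stable; exfalso.
have low : moment (3 * k) c <= \sum_(0 <= i < 3 * k) i.
  rewrite /moment big_nat_cond [X in _ <= X]big_nat_cond.
  apply: leq_sum => -[//|i] /andP [/andP [_ i_lt] _].
  have := stable (Ordinal i_lt); rewrite /= -leqNgt => ci_le1.
  by rewrite -[X in _ <= X]muln1 leq_mul2l ci_le1 orbT.
have sum_id : 2 * \sum_(0 <= i < 3 * k) i = 3 * k * (3 * k).-1.
  by rewrite bin2_sum -mul_bin_diag bin1.
move: mom; rewrite /moment big_nat_recr //= -/(moment (3 * k) c) => mom.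
have top_le : 3 * k * c (3 * k) <= 3 * k * (k - 1) by rewrite leq_mul2l; lia.
(* 16k^2 = 2 * moment <= 3k(3k - 1) + 6k(k - 1) = 15k^2 - 9k *)
have tri_sq : 3 * k * (3 * k).-1 = 9 * (k * k) - 3 * k by clear -k_gt0; nia.
have top_sq : 3 * k * (k - 1) = 3 * (k * k) - 3 * k by clear -k_gt0; nia.
clear stable; lia.
Qed.

Lemma subset_of_card (T : finType) (A : {set T}) j :
  j <= #|A| -> exists2 B : {set T}, B \subset A & #|B| = j.
Proof.
case/card_geqP => s [s_uniq <- sA]; exists [set x in s].
  by apply/subsetP => x; rewrite inE; exact: sA.
by rewrite cardsE; apply/card_uniqP.
Qed.

Local Open Scope ring_scope.

Lemma can_ensure_mono (R : realType) n (P Q : ('I_n -> R) -> Prop) t f :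
  (forall g, P g -> Q g) -> can_ensure P t f -> can_ensure Q t f.
Proof.
move=> PQ; elim: t f => [|t IH] f /=; first exact: PQ.
case=> [/PQ|[p [a [legal next]]]]; first by left.
by right; exists p, a; split=> // S /next /IH.
Qed.

Section Greedy.
Variables (R : realType) (n : nat) (h : 'I_n -> R) (p : nat) (S : {set 'I_n}).
Hypothesis greedyS : greedy_choice h p S.

Lemma greedy_choice_supset (A : {set 'I_n}) : (#|A| <= p)%N ->
  (forall i j, i \in A -> j \notin A -> h j < h i) -> A \subset S.
Proof.
case: greedyS => cardS geS cardA sepA; apply/subsetP => j jA.
apply/negPn/negP => jS.
have SA : S \subset A :\ j.
  apply/subsetP => i iS; rewrite !inE; apply/andP; split.
    by apply: contraNneq jS => <-.
  apply/negPn/negP => iA.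
  by have := lt_le_trans (sepA j i jA iA) (geS i j iS jS); rewrite ltxx.
by have := subset_leq_card SA; move: cardA; rewrite cardS (cardsD1 j A) jA; lia.
Qed.

Lemma greedy_choice_subset (B : {set 'I_n}) : (p <= #|B|)%N ->
  (forall i j, i \in B -> j \notin B -> h j < h i) -> S \subset B.
Proof.
case: greedyS => cardS geS cardB sepB; apply/subsetP => i iS.
apply/negPn/negP => iB.
have BS : B \subset S.
  apply/subsetP => j jB; apply/negPn/negP => jS.
  by have := lt_le_trans (sepB j i jB iB) (geS i j iS jS); rewrite ltxx.
have : i |: B \subset S by rewrite subUset sub1set iS BS.
by move/subset_leq_card; rewrite cardsU1 iB cardS; lia.
Qed.

End Greedy.

Lemma count_fill_agree (R : realType) n (f g : 'I_n -> R) (T : {set 'I_n}) y :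
  (forall i, i \notin T -> g i = f i) ->
  (count_fill g y + #|[set i in T | f i == y]| =
   count_fill f y + #|[set i in T | g i == y]|)%N.
Proof.
move=> agree; rewrite /count_fill.
rewrite -(cardsID T [set i | g i == y]) -(cardsID T [set i | f i == y]).
have -> : [set i | g i == y] :\: T = [set i | f i == y] :\: T.
  by apply/setP => i; rewrite !inE; case: (boolP (i \in T)) => //= iT; rewrite agree.
have inT (u : 'I_n -> R) : [set i | u i == y] :&: T = [set i in T | u i == y].
  by apply/setP => i; rewrite !inE andbC.
by rewrite (inT f) (inT g) addnAC [RHS]addnAC; congr (_ + _); exact: addnC.
Qed.

Section SplitRound.
Variables (R : realType) (n : nat) (f : 'I_n -> R) (x : R) (s : nat) (T : {set 'I_n}).
Hypotheses (s_gt0 : (0 < s)%N) (card_T : #|T| = (2 * s)%N).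
Hypothesis f_T : forall i, i \in T -> f i = x.

Let above := [set i | x < f i].
Let split_fill (i : 'I_n) : R := (i \in above)%:R + (i \in T)%:R / 2.

Let above_notin_T {i} : i \in above -> i \notin T.
Proof. by rewrite inE; apply: contraTN => /f_T ->; rewrite ltxx. Qed.

Let split_fill_above i : i \in above -> split_fill i = 1.
Proof.
by move=> iA; rewrite /split_fill iA (negbTE (above_notin_T iA)) mul0r addr0.
Qed.

Let split_fill_T i : i \in T -> split_fill i = 1 / 2.
Proof.
move=> iT; rewrite /split_fill iT.
by rewrite (_ : i \in above = false) ?add0r //; apply: contraTF iT => /above_notin_T.
Qed.

Let split_fill_else i : i \notin above -> i \notin T -> split_fill i = 0.
Proof. by move=> iA iT; rewrite /split_fill (negbTE iA) (negbTE iT) mul0r addr0. Qed.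

Let card_above_T : #|above :|: T| = (#|above| + 2 * s)%N.
Proof.
rewrite cardsU -card_T (_ : above :&: T = set0) ?cards0 ?subn0 //.
by apply/setP => i; rewrite in_setI in_set0; apply/negP => /andP [/above_notin_T/negP].
Qed.

Lemma split_move_legal : filler_move (#|above| + s) split_fill.
Proof.
split.
- lia.
- by have := max_card (mem (above :|: T)); rewrite card_ord card_above_T; lia.
- move=> i; case: (boolP (i \in above)) => iA.
    by rewrite split_fill_above // ler01 lexx.
  case: (boolP (i \in T)) => iT; first by rewrite split_fill_T //; apply/andP; split; lra.
  by rewrite split_fill_else // lexx ler01.
- rewrite /split_fill big_split /= -mulr_suml.
  have sum_ind (A : {set 'I_n}) : \sum_(i < n) ((i \in A) : nat)%:R = #|A|%:R :> R.
    by rewrite -natr_sum -sum1_card [in RHS]big_mkcond.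
  by rewrite !sum_ind card_T natrD natrM; lra.
Qed.

Lemma split_greedy S :
  greedy_choice (fun i => f i + split_fill i) (#|above| + s) S ->
  above \subset S /\ S \subset above :|: T.
Proof.
move=> greedyS; have fill_above i : i \in above -> x + 1 < f i + split_fill i.
  by move=> iA; rewrite split_fill_above //; move: iA; rewrite inE => ?; lra.
have fill_T i : i \in T -> f i + split_fill i = x + 1 / 2.
  by move=> iT; rewrite split_fill_T // f_T.
have fill_else i : i \notin above -> i \notin T -> f i + split_fill i <= x.
  by move=> iA iT; rewrite split_fill_else // addr0; move: iA; rewrite inE -leNgt.
split.
- apply: (greedy_choice_supset greedyS) => [|i j iA jA]; first exact: leq_addr.
  have := fill_above i iA; case: (boolP (j \in T)) => [/fill_T -> | jT]; first lra.
  by have := fill_else j jA jT; lra.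
- apply: (greedy_choice_subset greedyS) => [|i j]; first by rewrite card_above_T; lia.
  rewrite !in_setU negb_or => iAT /andP [jA jT]; have := fill_else j jA jT.
  case/orP: iAT => [iA | /fill_T ->]; last lra.
  by have := fill_above i iA; lra.
Qed.

Lemma split_round goal t :
  (forall g, (forall i, i \notin T -> g i = f i) ->
     #|[set i in T | g i == x - 1 / 2]| = s ->
     #|[set i in T | g i == x + 1 / 2]| = s -> can_ensure goal t g) ->
  can_ensure goal t.+1 f.
Proof.
move=> next; right; exists (#|above| + s)%N, split_fill.
split=> [|S greedyS]; first exact: split_move_legal.
have [aboveS S_aboveT] := split_greedy greedyS.
have card_ST : #|S :&: T| = s.
  move: greedyS => [+ _]; rewrite -(cardsID above S) (setIidPr aboveS).
  rewrite (_ : S :\: above = S :&: T); first exact: addnI.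
  apply/setP => i; rewrite in_setD in_setI andbC; case: (boolP (i \in S)) => //= iS.
  have := subsetP S_aboveT i iS; rewrite in_setU.
  by case: (boolP (i \in above)) => [/above_notin_T/negPf -> | _ /= ->].
have on_T i : i \in T -> f i + split_fill i - (i \in S)%:R = x + 1 / 2 - (i \in S)%:R.
  by move=> iT; rewrite split_fill_T // f_T.
apply: next => [i iT | |].
- case: (boolP (i \in above)) => iA.
    by rewrite split_fill_above // (subsetP aboveS) //=; lra.
  rewrite split_fill_else // (_ : i \in S = false) ?subr0 ?addr0 //.
  by apply: contraTF iA => /(subsetP S_aboveT); rewrite in_setU (negPf iT) orbF negbK.
- rewrite -card_ST; apply: eq_card => i; rewrite !inE.
  case: (boolP (i \in T)) => iT; rewrite ?andbT ?andbF // on_T //.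
  by case: (i \in S) => /=; apply/eqP; lra.
- have card_TS : #|T :\: S| = s.
    by have := cardsID S T; rewrite setIC card_ST card_T; lia.
  rewrite -card_TS; apply: eq_card => i; rewrite !inE.
  case: (boolP (i \in T)) => iT; rewrite ?andbT ?andbF // on_T //.
  by case: (i \in S) => /=; apply/eqP; lra.
Qed.

End SplitRound.

Section Strategy.
Variables (R : realType) (n k s : nat).
Hypotheses (k_gt0 : (0 < k)%N) (s_gt0 : (0 < s)%N).

Definition level (i : nat) : R := (i%:R - (2 * k)%:R) / 2.

Definition represents (c : nat -> nat) (g : 'I_n -> R) : Prop :=
  forall i, (i <= 3 * k)%N -> (s * c i <= count_fill g (level i))%N.

Definition reached (g : 'I_n -> R) : Prop := (s * k <= count_fill g (k%:R / 2))%N.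

Lemma level_succ i : level i.+1 = level i + 1 / 2.
Proof. by rewrite /level -addn1 natrD; lra. Qed.

Lemma level_pred i : (0 < i)%N -> level i.-1 = level i - 1 / 2.
Proof. by move=> i_gt0; rewrite -{2}(prednK i_gt0) level_succ; lra. Qed.

Lemma level_inj : injective level.
Proof.
by move=> i j; rewrite /level => eq_ij; apply/eqP; rewrite -(eqr_nat R); apply/eqP; lra.
Qed.

Lemma level_top : level (3 * k) = k%:R / 2.
Proof. by rewrite /level !natrM; lra. Qed.

Lemma level_start : level (2 * k) = 0.
Proof. by rewrite /level subrr mul0r. Qed.

Lemma represents_fire c f g i (T : {set 'I_n}) :
  represents c f -> (0 < i < 3 * k)%N -> (1 < c i)%N ->
  T \subset [set j | f j == level i] -> #|T| = (2 * s)%N ->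
  (forall j, j \notin T -> g j = f j) ->
  #|[set j in T | g j == level i - 1 / 2]| = s ->
  #|[set j in T | g j == level i + 1 / 2]| = s ->
  represents (fire c i) g.
Proof.
move=> rep /andP [i_gt0 i_lt] ci sT card_T agree below above j j_le.
have f_T l : l \in T -> f l = level i by move/(subsetP sT); rewrite inE => /eqP.
have := count_fill_agree (level j) agree; have := rep j j_le.
rewrite /fire; case: (eqVneq j i) => [-> | j_neq].
  rewrite (_ : [set l in T | f l == level i] = T) ?card_T; first by rewrite mulnBr; lia.
  by apply/setP => l; rewrite inE; case: (boolP (l \in T)) => //= /f_T ->; exact: eqxx.
rewrite (_ : [set l in T | f l == level j] = set0) ?cards0 ?addn0; last first.
  apply/setP => l; rewrite !inE; case: (boolP (l \in T)) => //= /f_T ->.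
  by rewrite (inj_eq level_inj) eq_sym (negPf j_neq).
case: (eqVneq j i.-1) => [-> | _] /=; first by rewrite level_pred // below; lia.
case: (eqVneq j i.+1) => [-> | _] /=; first by rewrite level_succ above; lia.
lia.
Qed.

Lemma can_ensure_from_chips t c g :
  mass (3 * k).+1 c = (4 * k)%N -> moment (3 * k).+1 c = (8 * k * k)%N ->
  represents c g -> (36 * k ^ 3 < energy (3 * k).+1 c + 2 * t)%N ->
  can_ensure reached t g.
Proof.
elim: t c g => [|t IH] c g mass_c moment_c rep budget.
  by move: budget; have := energy_le (3 * k) c; rewrite mass_c; clear; nia.
case: (leqP k (c (3 * k))) => [top_ge | top_lt].
  left; rewrite /reached -level_top; apply: leq_trans (rep _ (leqnn _)).
  by rewrite leq_mul2l top_ge orbT.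
have [i /andP [i_gt0 i_lt] ci] := unstable_interior_site k_gt0 moment_c top_lt.
have [T sT card_T] : exists2 T : {set 'I_n},
    T \subset [set j | g j == level i] & #|T| = (2 * s)%N.
  apply: subset_of_card; apply: leq_trans (rep i (ltnW i_lt)).
  by rewrite mulnC leq_mul2l ci orbT.
apply: (split_round (x := level i) s_gt0 card_T).
  by move=> j /(subsetP sT); rewrite inE => /eqP.
move=> g' agree below above.
apply: (IH (fire c i)).
- by rewrite mass_fire.
- by rewrite moment_fire.
- by apply: represents_fire rep _ ci sT card_T agree below above; rewrite i_gt0.
- by rewrite energy_fire //; lia.
Qed.

End Strategy.

Theorem lemma5p4 :
  exists C : nat, forall (R : realType) (n k m : nat) (f : 'I_n -> R),
    (0 < k)%N -> (0 < m)%N -> (4 * k %| m)%N -> (m <= n)%N ->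
    (m <= count_fill f 0)%N ->
    can_ensure (fun g => (m <= 4 * count_fill g (k%:R / 2))%N) (C * k ^ 3) f.
Proof.
exists 11%N => R n k m f k_gt0 m_gt0 /dvdnP [s m_eq] _ zeros; subst m.
have s_gt0 : (0 < s)%N by move: m_gt0; rewrite muln_gt0 => /andP [].
pose start j := (4 * k * (j == 2 * k))%N.
apply: (can_ensure_mono (P := reached k s)); first by move=> g; rewrite /reached; lia.
apply: (can_ensure_from_chips k_gt0 s_gt0 (c := start)).
- by rewrite /mass (sum_nat_mul_eq (fun=> 4 * k)%N); lia.
- rewrite /moment; under eq_bigr do rewrite mulnA.
  by rewrite (sum_nat_mul_eq (fun j => j * (4 * k)))%N; lia.
- move=> j _; rewrite /start; case: (eqVneq j (2 * k)%N) => [-> | _].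
    by rewrite level_start muln1.
  by rewrite !muln0.
- rewrite /energy; under eq_bigr do rewrite mulnA.
  by rewrite (sum_nat_mul_eq (fun j => j * j * (4 * k)))%N; nia.
Qed.
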